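(* Let $G$ be a graph with at least one edge such that the subgraph of $G$ induced by all vertices of degree at least $3$ is a forest. Then $\chi_s'(G) \le 4\Delta(G) - 3$.
   Context: All graphs are finite and simple; $\Delta(G)$ is the maximum degree. A strong edge coloring of $G$ is an assignment of colors to the edges of $G$ such that every path with three edges receives three distinct colors; equivalently, any two distinct edges that share an endpoint, or whose endpoints are joined by an edge, receive different colors. The strong chromatic index $\chi_s'(G)$ is the minimum number of colors in a strong edge coloring of $G$. *)

From mathcomp Require Import all_boot.
Set Implicit Arguments. Unset Strict Implicit. Unset Printing Implicit Defensive.

Section Graphs.
Variable T : finType.
Variable e : rel T.

Definition simple_graph : Prop := symmetric e /\ irreflexive e.

Definition deg (x : T) : nat := #|[set y | e x y]|.
Definition maxdeg : nat := \max_(x : T) deg x.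

Definition is_edge (E : {set T}) : bool :=
  [exists u, exists v, e u v && (E == [set u; v])].

Definition edges_conflict (E F : {set T}) : bool :=
  (E :&: F != set0) || [exists x in E, exists y in F, e x y].

Definition strong_edge_coloring (k : nat) (c : {set T} -> nat) : Prop :=
  (forall E, is_edge E -> c E < k) /\
  (forall E F, is_edge E -> is_edge F -> E != F -> edges_conflict E F ->
     c E != c F).

Definition strong_chromatic_index_le (k : nat) : Prop :=
  exists c : {set T} -> nat, strong_edge_coloring k c.

Definition induces_forest (S : {set T}) : Prop :=
  ~ exists p : seq T, [/\ uniq p, 3 <= size p, all (fun x => x \in S) p & cycle e p].

Definition high_deg_set : {set T} := [set x | 3 <= deg x].
End Graphs.

From mathcomp Require Import all_boot zify.
Set Implicit Arguments. Unset Strict Implicit. Unset Printing Implicit Defensive.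

(* Let D = maxdeg e.  The bound chi_s'(G) <= 4D - 3 follows from a degeneracy
   argument: every nonempty set F of edges contains an edge that is in
   conflict with at most 4D - 4 other edges of F, so the edges can be colored
   greedily, removing such an edge, coloring the rest and giving it a free
   color (Section Greedy).

   The conflicts of an edge uv inside F are counted through the neighbors:
   each one is an edge of F at a neighbor w of u (resp. v) other than wu
   (resp. wv).  Summing these counts over the neighbors of z gives the "load"
   of z, and z is "light" when its load is at most 2(D - 1); an edge of F with
   two light ends has at most 4D - 4 conflicts.  A vertex is light when its
   degree is at most 2, or when all its neighbors but one carry at most one
   edge of F besides the one towards it.

   To find an edge with two light ends we use the hubs of F: vertices of
   degree >= 3 covered by F.  They induce a forest, and the start of a longest
   path in it gives a leaf v whose neighbor a has, apart from one vertex s,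
   only leaf hubs as neighbors (Section ForestPaths).  If no light edge
   existed, all edges of F at such leaves would go to a, and then va would be
   a light edge (Section LightEdge). *)

Lemma card_bigcup_le (I T : finType) (A : {pred I}) (F : I -> {set T}) :
  #|\bigcup_(i in A) F i| <= \sum_(i in A) #|F i|.
Proof.
apply: (big_ind2 (fun (X : {set T}) n => #|X| <= n)); first by rewrite cards0.
  by move=> X1 n1 X2 n2 h1 h2; apply: leq_trans (leq_card_setU _ _) (leq_add h1 h2).
by [].
Qed.

Lemma sum_one_exception (I : finType) (A : {set I}) (f : I -> nat) (s : I) b :
  (forall i, i \in A -> f i <= b) -> (forall i, i \in A -> i != s -> f i <= 1) ->
  \sum_(i in A) f i <= #|A| + b - 1.
Proof.
move=> le_b le_1; case: (boolP (s \in A)) => sA.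
  rewrite (big_setD1 s sA) (cardsD1 s A) sA /=.
  have : \sum_(i in A :\ s) f i <= #|A :\ s|.
    rewrite -sum1_card; apply: leq_sum => i; rewrite !inE => /andP[i_ne_s iA].
    exact: le_1.
  by have := le_b s sA; lia.
have : \sum_(i in A) f i <= #|A| * minn 1 b.
  rewrite -sum_nat_const; apply: leq_sum => i iA; rewrite leq_min le_b // le_1 //.
  by apply: contraNneq sA => <-.
by case: b {le_b} => [|b]; rewrite ?muln0 ?muln1; lia.
Qed.

Section Greedy.
Variables (X : finType) (cf : rel X) (k : nat).
Hypothesis cf_sym : symmetric cf.

Definition proper_on (c : X -> nat) (F : {set X}) : Prop :=
  (forall x, x \in F -> c x < k) /\
  (forall x y, x \in F -> y \in F -> x != y -> cf x y -> c x != c y).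

Definition conflicts_in (F : {set X}) (f : X) : {set X} :=
  [set g in F | (g != f) && cf f g].

Lemma free_color (s : seq nat) : size s < k -> exists2 i, i < k & i \notin s.
Proof.
move=> lt_s_k; case: (boolP (all (fun i => i \in s) (iota 0 k))) => [/allP all_s|].
  by have := uniq_leq_size (iota_uniq 0 k) all_s; rewrite size_iota leqNgt lt_s_k.
by case/allPn => i; rewrite mem_iota add0n => /andP[_ ik] iS; exists i.
Qed.

Lemma proper_on_extend c F f i :
  proper_on c (F :\ f) -> i < k -> (forall g, g \in conflicts_in F f -> c g != i) ->
  proper_on (fun x => if x == f then i else c x) F.
Proof.
move=> [c_lt c_ne] ik free; split=> [x xF|x y xF yF xy cxy].
  by case: eqP => [//|/eqP xf]; apply: c_lt; rewrite !inE xf.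
case: (eqVneq x f) => [xf|xf]; case: (eqVneq y f) => [yf|yf].
- by rewrite xf yf eqxx in xy.
- by rewrite eq_sym free // !inE yF yf -xf cxy.
- by rewrite free // !inE xF xf -yf cf_sym cxy.
- by apply: c_ne; rewrite // !inE ?xf ?yf.
Qed.

Lemma greedy_coloring (P : {set X}) :
  (forall F : {set X}, F \subset P -> F != set0 ->
     exists2 f, f \in F & #|conflicts_in F f| < k) ->
  exists c, proper_on c P.
Proof.
move=> degenerate; suff: forall F : {set X}, F \subset P -> exists c, proper_on c F by apply.
move=> F; have [n] := ubnP #|F|; elim: n F => // n IH F ltFn sFP.
case: (eqVneq F set0) => [->|F0]; first by exists (fun=> 0); split=> x; rewrite inE.
have [f fF few] := degenerate F sFP F0.
have [c c_prop] : exists c, proper_on c (F :\ f).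
  apply: IH; last by apply: subset_trans sFP; apply: subsetDl.
  by move: ltFn; rewrite (cardsD1 f F) fF.
have [|i ik iS] := @free_color [seq c g | g <- enum (conflicts_in F f)].
  by rewrite size_map -cardE.
exists (fun x => if x == f then i else c x); apply: proper_on_extend => // g gG.
by apply: contraNneq iS => <-; rewrite map_f // mem_enum.
Qed.
End Greedy.

Section Graph.
Variables (T : finType) (e : rel T).
Hypotheses (e_sym : symmetric e) (e_irr : irreflexive e).

Lemma deg_le_maxdeg x : deg e x <= maxdeg e.
Proof. exact: (leq_bigmax (F := deg e) x). Qed.

Lemma edge_at g x : is_edge e g -> x \in g -> exists2 y, e x y & g = [set x; y].
Proof.
case/existsP => u /existsP[v /andP[euv /eqP->]]; rewrite !inE.
by case/orP=> /eqP->; [exists v | exists u; rewrite 1?e_sym // setUC].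
Qed.

Lemma conflict_sym : symmetric (edges_conflict e).
Proof.
move=> E F; rewrite /edges_conflict setIC; congr (_ || _).
apply/existsP/existsP => -[x /andP[xE /existsP[y /andP[yF exy]]]];
  by exists y; rewrite yF /=; apply/existsP; exists x; rewrite xE e_sym.
Qed.

Section ForestPaths.

Definition wpath (W : {set T}) (x : T) (p : seq T) : bool :=
  [&& path e x p, uniq (x :: p) & all (fun z => z \in W) (x :: p)].

Lemma wpath_cons W y x p :
  wpath W y (x :: p) = [&& e y x, y \notin x :: p, y \in W & wpath W x p].
Proof. by rewrite /wpath cons_uniq /= -!andbA; do !bool_congr. Qed.

Definition longest_wpath (W : {set T}) (x : T) (p : seq T) : Prop :=
  wpath W x p /\ forall y q, wpath W y q -> size q <= size p.

Lemma induces_forest_sub (S W : {set T}) :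
  W \subset S -> induces_forest e S -> induces_forest e W.
Proof.
move=> sWS forestS [p [up sp /allP pW cp]]; apply: forestS; exists p; split=> //.
by apply/allP => z /pW /(subsetP sWS).
Qed.

(* in a forest, the start of a path is adjacent to no vertex past the second one,
   as that would close a cycle *)
Lemma wpath_no_chord W x p y :
  induces_forest e W -> wpath W x p -> y \in behead p -> ~~ e x y.
Proof.
move=> forestW /and3P[pth un al] yb; apply/negP => exy; apply: forestW.
case: p yb pth un al => [//|a s] /= ys pth un al.
case/splitPr: ys pth un al => s1 s2 pth un al.
have sub : subseq (x :: a :: rcons s1 y) (x :: a :: (s1 ++ y :: s2)).
  by rewrite /= !eqxx -cats1 cat_subseq ?subseq_refl //= eqxx sub0seq.
exists (x :: a :: rcons s1 y); split.
- exact: subseq_uniq sub un.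
- by rewrite /= size_rcons.
- by apply/allP => z /(mem_subseq sub); apply/allP.
- rewrite /= rcons_path last_rcons (e_sym y) exy andbT.
  move: pth; rewrite /= cat_path => /and3P[-> p1 p2] /=.
  by rewrite rcons_path p1 /=; case/andP: p2.
Qed.

Lemma longest_wpath_exists W : W != set0 -> exists x p, longest_wpath W x p.
Proof.
move=> W0.
pose has_wpath n := [exists x, exists t : n.-tuple T, wpath W x t].
have some_wpath : exists n, has_wpath n.
  case/set0Pn: W0 => w wW; exists 0; apply/existsP; exists w; apply/existsP.
  by exists [tuple]; rewrite /wpath /= wW.
have bounded : forall n, has_wpath n -> n <= #|T|.
  move=> n /existsP[x /existsP[t /and3P[_ /card_uniqP ut _]]].
  rewrite -(size_tuple t); apply: ltnW.
  by rewrite -[(size t).+1]/(size (x :: t)) -ut max_card.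
have [n /existsP[x /existsP[t wt]] maxn] := ex_maxnP some_wpath bounded.
exists x, t; split=> // y q wq; rewrite size_tuple; apply: maxn.
by apply/existsP; exists y; apply/existsP; exists (in_tuple q).
Qed.

(* a longest path cannot be extended, so all W-neighbors of its start lie on it,
   and by acyclicity they all equal its second vertex *)
Lemma longest_start_nbr W x p y :
  induces_forest e W -> longest_wpath W x p -> y \in W -> e x y -> y = head x p.
Proof.
move=> forestW [wp maxp] yW exy.
have yx : y != x by apply: contraTneq exy => ->; rewrite e_irr.
have yp : y \in p.
  suff : y \in x :: p by rewrite inE (negbTE yx).
  apply/negPn/negP => yn; suff : size (x :: p) <= size p by rewrite /= ltnn.
  by apply: (maxp y); rewrite wpath_cons e_sym exy yn yW.
case: p wp yp {maxp} => [//|a q] wp /=; rewrite inE => /orP[/eqP//|yq].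
by have := wpath_no_chord forestW wp yq; rewrite exy.
Qed.

(* a W-neighbor x of the second vertex a, other than the third one, can replace
   the start of a longest path: acyclicity keeps x off the rest of the path *)
Lemma longest_restart W v a q x :
  induces_forest e W -> longest_wpath W v (a :: q) -> x \in W -> e a x ->
  x != head a q -> longest_wpath W x (a :: q).
Proof.
move=> forestW [wp maxp] xW eax xs; case: (eqVneq x v) => [-> //|xv].
have wq : wpath W a q by move: wp; rewrite wpath_cons => /and4P[].
split=> //; rewrite wpath_cons (e_sym x) eax xW wq inE negb_or /= andbT.
apply/andP; split; first by apply: contraTneq eax => ->; rewrite e_irr.
apply/negP; case: q wq xs {wp maxp} => [//|b r] wq /= xb; rewrite inE.
case/orP => [/eqP xb'|xr]; first by rewrite xb' eqxx in xb.
by have := wpath_no_chord forestW wq xr; rewrite eax.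
Qed.

Lemma forest_leaf_structure W :
  induces_forest e W -> W != set0 ->
  exists v a s, [/\ v \in W, forall y, y \in W -> e v y -> y = a &
    forall x, x \in W -> e a x -> x != s -> forall z, z \in W -> e x z -> z = a].
Proof.
move=> forestW /longest_wpath_exists[v [p lp]].
have vW : v \in W by case: lp => /and3P[_ _ /andP[]].
case: p lp => [|a q] lp.
  exists v, v, v; split=> // [y yW evy|x xW evx].
    exact: longest_start_nbr forestW lp yW evy.
  by have /= xv := longest_start_nbr forestW lp xW evx; rewrite xv e_irr in evx.
exists v, a, (head a q); split=> // [y yW evy|x xW eax xs z zW exz].
  exact: longest_start_nbr forestW lp yW evy.
exact: longest_start_nbr forestW (longest_restart forestW lp xW eax xs) zW exz.
Qed.
End ForestPaths.

Lemma deg_gt0 u v : e u v -> 0 < deg e u.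
Proof. by move=> euv; rewrite /deg card_gt0; apply/set0Pn; exists v; rewrite inE. Qed.

Section LightEdge.
Variable F : {set {set T}}.
Hypothesis F_edges : forall g, g \in F -> is_edge e g.

Definition others (w z : T) : {set {set T}} :=
  [set g in F | (w \in g) && (g != [set w; z])].

Definition load (z : T) : nat := \sum_(w in [set y | e z y]) #|others w z|.

Definition light (z : T) : bool := load z <= 2 * (maxdeg e - 1).

Definition hubs : {set T} := [set w | (3 <= deg e w) && [exists g in F, w \in g]].

Definition leaf (x a : T) : Prop := forall y, y \in hubs -> e x y -> y = a.

Lemma conflicts_sub u v :
  e u v -> conflicts_in (edges_conflict e) F [set u; v] \subset
    (\bigcup_(w in [set y | e u y]) others w u) :|:
    (\bigcup_(w in [set y | e v y]) others w v).
Proof.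
move=> euv; apply/subsetP => g; rewrite inE => /andP[gF /andP[gne cfl]].
case: (boolP (u \in g)) => ug.
  rewrite in_setU; apply/orP; right; apply/bigcupP; exists u; first by rewrite inE e_sym.
  by rewrite inE gF ug gne.
case: (boolP (v \in g)) => vg.
  rewrite in_setU; apply/orP; left; apply/bigcupP; exists v; first by rewrite inE.
  by rewrite inE gF vg setUC gne.
move: cfl; rewrite /edges_conflict; case/orP.
  by case/set0Pn => a; rewrite !inE => /andP[/orP[]/eqP-> ag]; rewrite ag in ug vg.
case/existsP => a /andP[]; rewrite !inE => /orP[]/eqP-> /existsP[b /andP[bg eab]].
  apply/orP; left; apply/bigcupP; exists b; first by rewrite inE.
  rewrite inE gF bg /=; apply/eqP => gq; by rewrite gq !inE eqxx orbT in ug.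
apply/orP; right; apply/bigcupP; exists b; first by rewrite inE.
rewrite inE gF bg /=; apply/eqP => gq; by rewrite gq !inE eqxx orbT in vg.
Qed.

Lemma conflicts_le_load u v :
  e u v -> #|conflicts_in (edges_conflict e) F [set u; v]| <= load u + load v.
Proof.
move=> euv; apply: leq_trans (subset_leq_card (conflicts_sub euv)) _.
by apply: leq_trans (leq_card_setU _ _) (leq_add (card_bigcup_le _ _) (card_bigcup_le _ _)).
Qed.

(* the edges of F at w other than wz go to the other neighbors of w *)
Lemma others_le_deg w z : e w z -> #|others w z| <= deg e w - 1.
Proof.
move=> ewz; have -> : deg e w - 1 = #|[set y | e w y] :\ z|.
  by rewrite /deg (cardsD1 z [set y | e w y]) inE ewz add1n subn1.
apply: leq_trans (leq_imset_card (fun y => [set w; y]) _).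
apply: subset_leq_card; apply/subsetP => g; rewrite inE => /and3P[gF wg gne].
have [y ewy gwy] := edge_at (F_edges gF) wg.
apply/imsetP; exists y => //; rewrite !inE ewy andbT.
by apply: contraNneq gne => yz; rewrite gwy yz.
Qed.

(* a non-hub has degree at most 2 or carries no edge of F *)
Lemma others_non_hub w z : e w z -> w \notin hubs -> #|others w z| <= 1.
Proof.
move=> ewz; rewrite inE negb_and -ltnNge => /orP[dw|uncovered].
  by apply: leq_trans (others_le_deg ewz) _; lia.
suff -> : others w z = set0 by rewrite cards0.
apply/setP => g; rewrite !inE; apply/negP => /and3P[gF wg _].
by case/negP: uncovered; apply/exists_inP; exists g.
Qed.

Lemma others_pure w z :
  (forall g, g \in F -> w \in g -> g = [set w; z]) -> others w z = set0.
Proof.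
move=> pure; apply/setP => g; rewrite !inE; apply/negP => /and3P[gF wg].
by rewrite (pure g gF wg) eqxx.
Qed.

Lemma load_le z : load z <= deg e z * (maxdeg e - 1).
Proof.
rewrite /load /deg -sum_nat_const; apply: leq_sum => w; rewrite inE => ezw.
by apply: leq_trans (others_le_deg _) (leq_sub2r 1 (deg_le_maxdeg w)); rewrite e_sym.
Qed.

Lemma light_low_deg z : deg e z <= 2 -> light z.
Proof. by move=> dz; apply: leq_trans (load_le z) (leq_mul dz (leqnn _)). Qed.

Lemma light_one_exception z s :
  (forall w, e z w -> w != s -> #|others w z| <= 1) -> light z.
Proof.
move=> le1; rewrite /light /load.
apply: leq_trans (sum_one_exception (s := s) (b := maxdeg e - 1) _ _) _.
- move=> w; rewrite inE => ezw.
  by apply: leq_trans (others_le_deg _) (leq_sub2r 1 (deg_le_maxdeg w)); rewrite e_sym.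
- by move=> w; rewrite inE; apply: le1.
- by have := deg_le_maxdeg z; rewrite /deg; lia.
Qed.

Lemma light_leaf x a : leaf x a -> light x.
Proof.
move=> lf; apply: (light_one_exception (s := a)) => w exw wa.
by apply: others_non_hub; [rewrite e_sym | apply: contra wa => /lf/(_ exw) ->].
Qed.

Lemma exists_light_edge :
  induces_forest e (high_deg_set e) -> F != set0 ->
  exists u v, [/\ e u v, [set u; v] \in F, light u & light v].
Proof.
move=> forest F0.
suff : [exists u, exists v, [&& e u v, [set u; v] \in F, light u & light v]].
  by case/existsP => u /existsP[v /and4P[]]; exists u, v.
apply: contraT => none.
have no_light u v : e u v -> [set u; v] \in F -> light u -> light v -> False.
  move=> euv uvF lu lv; case/negP: none; apply/existsP; exists u; apply/existsP.
  by exists v; rewrite euv uvF lu lv.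
(* without light edges, all edges of F at a leaf go to its hub neighbor *)
have leaf_pure x a :
    leaf x a -> forall g, g \in F -> x \in g -> e x a /\ g = [set x; a].
  move=> lf g gF xg; have [y exy gxy] := edge_at (F_edges gF) xg.
  case: (leqP (deg e y) 2) => [dy|dy].
    by case: (no_light x y exy _ (light_leaf lf) (light_low_deg dy)); rewrite -gxy.
  have yH : y \in hubs.
    by rewrite inE dy; apply/exists_inP; exists g; rewrite // gxy !inE eqxx orbT.
  by rewrite -(lf y yH exy).
have hubs0 : hubs != set0.
  case/set0Pn: F0 => g gF; case/existsP: (F_edges gF) => u /existsP[v /andP[euv /eqP guv]].
  have cover w : 2 < deg e w -> w \in g -> hubs != set0.
    by move=> dw wg; apply/set0Pn; exists w; rewrite inE dw; apply/exists_inP; exists g.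
  case: (leqP (deg e u) 2) => du; last by apply: (cover u); rewrite // guv !inE eqxx.
  case: (leqP (deg e v) 2) => dv; last by apply: (cover v); rewrite // guv !inE eqxx orbT.
  by case: (no_light u v euv _ (light_low_deg du) (light_low_deg dv)); rewrite -guv.
have forest_hubs : induces_forest e hubs.
  by apply: induces_forest_sub forest; apply/subsetP => w; rewrite !inE => /andP[].
have [v [a [s [vH leaf_v leaf_nbrs]]]] := forest_leaf_structure forest_hubs hubs0.
have [eva vaF] : e v a /\ [set v; a] \in F.
  move: vH; rewrite inE => /andP[_ /exists_inP[g gF vg]].
  by have [eva gva] := leaf_pure v a leaf_v g gF vg; rewrite -gva.
(* the hubs adjacent to a, apart from s, carry only edges towards a *)
have light_a : light a.
  apply: (light_one_exception (s := s)) => w eaw ws.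
  case: (boolP (w \in hubs)) => wH; last by apply: others_non_hub; rewrite // e_sym.
  rewrite (@others_pure w a) ?cards0 // => g gF wg.
  by have [_ ->] := leaf_pure w a (leaf_nbrs w wH eaw ws) g gF wg.
by case: (no_light v a eva vaF (light_leaf leaf_v) light_a).
Qed.

Lemma few_conflicts_edge :
  induces_forest e (high_deg_set e) -> F != set0 ->
  exists2 f, f \in F & #|conflicts_in (edges_conflict e) F f| < 4 * maxdeg e - 3.
Proof.
move=> forest F0; have [u [v [euv uvF lu lv]]] := exists_light_edge forest F0.
exists [set u; v] => //; have := conflicts_le_load euv.
have := leq_trans (deg_gt0 euv) (deg_le_maxdeg u); rewrite /light in lu lv; lia.
Qed.
End LightEdge.
End Graph.

Theorem theorem4 (T : finType) (e : rel T) :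
  simple_graph e ->
  (exists u v, e u v) ->
  induces_forest e (high_deg_set e) ->
  strong_chromatic_index_le e (4 * maxdeg e - 3).
Proof.
move=> [e_sym e_irr] _ forest.
have [|c [c_lt c_ne]] := @greedy_coloring _ (edges_conflict e) (4 * maxdeg e - 3)
    (conflict_sym e_sym) [set E | is_edge e E].
  move=> F sFP F0; apply: few_conflicts_edge => // g gF.
  by have := subsetP sFP g gF; rewrite inE.
by exists c; split=> [E hE|E E' hE hE']; [apply: c_lt | apply: c_ne]; rewrite ?inE.
Qed.
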